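(* $\textsc{DiffBest}(\mathsf{T}\mathsf{S}\mathsf{T},\mathsf{S}\mathsf{T}\mathsf{S}\mathsf{T},n)=\Theta(n)$ and $\textsc{DiffBest}(\mathsf{S}\mathsf{T}\mathsf{S}\mathsf{T},\mathsf{T}\mathsf{S}\mathsf{T},n)=\Theta(n)$, where for sequences $X,Y$, $\textsc{DiffBest}(X,Y,n)=\max\{|\mathrm{Best}_{\succ_X}(r)\setminus\mathrm{Best}_{\succ_Y}(r)|\}$, the maximum taken over all initial preference formulas and all t-relations $r$ with $|r|=n$.
   Context: Fix attribute–taxonomy pairs $A_1{:}T_1,\dots,A_d{:}T_d$ with distinct attribute names, where each taxonomy $T_i=(V_i,\le_{V_i})$ is a poset. A t-tuple over a t-schema $S\subseteq\{A_1{:}T_1,\dots,A_d{:}T_d\}$ maps each $A_i$ in $S$ to a value of $V_i$; $\mathcal{D}$ is the set of all t-tuples over all such t-schemas, and a t-relation is a finite set of t-tuples. A preference relation is a binary relation $\succeq$ on $\mathcal{D}$; its strict part is $t_1\succ t_2$ iff $t_1\succeq t_2$ and not $t_2\succeq t_1$. Preferences are given by a formula $F(x,y)=\bigvee_i P_i(x,y)$, a disjunction of statements; each statement $P_i$ is a disjunction of clauses, each clause a satisfiable conjunction of atoms of the forms $x[A_i]\le_{V_i} v$, $x[A_i]\not\le_{V_i} v$, $y[A_i]\le_{V_i} v$, $y[A_i]\not\le_{V_i} v$; the formula induces $t_1\succeq t_2\iff F(t_1,t_2)$. Operator $\mathsf{T}$ maps a formula to one inducing the transitive closure over $\mathcal{D}$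 of the induced relation. Operator $\mathsf{S}$ (specificity-based refinement): repeat rounds; in a round, for each statement $P_i$ let $\mathrm{Impl}(P_i)$ be the set of statements $P_j$ such that $P_j(t_2,t_1)\Rightarrow P_i(t_1,t_2)$ for all $t_1,t_2\in\mathcal{D}$ but not conversely; simultaneously replace every $P_i$ with nonempty $\mathrm{Impl}(P_i)$ by $P_i(x,y)\wedge\bigwedge_{P_j\in \mathrm{Impl}(P_i)}\neg P_j(y,x)$; stop when no $\mathrm{Impl}$ set is nonempty. After each operator, contradictory clauses and subsumed statements are removed. For $X\in\{\mathsf{T},\mathsf{S}\}^*$, $\succeq_X$ (strict part $\succ_X$) is the relation induced by applying the operators of $X$ in order to the initial formula. The Best operator is $\mathrm{Best}_\succ(r)=\{t_1\in r\mid \nexists t_2\in r,\ t_2\succ t_1\}$. *)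

From mathcomp Require Import ssreflect ssrfun ssrbool eqtype ssrnat fintype.
From Stdlib Require Import List.

Set Implicit Arguments.
Unset Strict Implicit.

(* Attribute-taxonomy pairs A_1:T_1 ... A_d:T_d, T_i = (V_i, <=_{V_i}) a poset. *)
Record Setting := {
  dim : nat;
  Val : 'I_dim -> Type;
  tle : forall i, Val i -> Val i -> Prop;
  tle_refl : forall i (a : Val i), tle a a;
  tle_antisym : forall i (a b : Val i), tle a b -> tle b a -> a = b;
  tle_trans : forall i (a b c : Val i), tle a b -> tle b c -> tle a c
}.
Arguments Val : clear implicits.

(* A t-tuple over some t-schema: attribute i is in the schema iff t i <> None.
   D is the type of all such t-tuples (all schemas). *)
Definition ttuple (S : Setting) := forall i : 'I_(dim S), option (Val S i).

Definition rel (S : Setting) := ttuple S -> ttuple S -> Prop.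

(* t[A_i] <= v  (false when A_i is not in the schema of t) *)
Definition vle (S : Setting) (t : ttuple S) (i : 'I_(dim S)) (v : Val S i) : Prop :=
  exists a, t i = Some a /\ tle a v.

(* Atoms:  on_x selects x (true) or y (false); pos = true is  z[A_i] <= v,
   pos = false is  z[A_i] \not<= v  (the negation of the former). *)
Record atom (S : Setting) := Atom {
  on_x : bool;
  attr : 'I_(dim S);
  aval : Val S attr;
  pos : bool
}.
Arguments Val : clear implicits.

Definition atom_sem (S : Setting) (a : atom S) : rel S :=
  fun x y =>
    let t := if on_x a then x else y in
    if pos a then vle t (aval a) else ~ vle t (aval a).

Definition clause (S : Setting) := list (atom S).
Definition clause_sem (S : Setting) (c : clause S) : rel S :=
  fun x y => forall a, List.In a c -> atom_sem a x y.
Definition clause_satisfiable (S : Setting) (c : clause S) : Prop :=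
  exists x y, clause_sem c x y.

Definition statement (S : Setting) := list (clause S).
Definition statement_sem (S : Setting) (P : statement S) : rel S :=
  fun x y => exists c, List.In c P /\ clause_sem c x y.

Definition formula (S : Setting) := list (statement S).
Definition valid_formula (S : Setting) (F : formula S) : Prop :=
  forall P, List.In P F -> P <> nil /\
     forall c, List.In c P -> clause_satisfiable c.

(* Semantic level: a formula is represented by the set of (the relations
   induced by) its statements.  Removing contradictory clauses does not
   change the relation of a statement; removing duplicated statements is
   automatic at this level. *)
Definition sformula (S : Setting) := rel S -> Prop.

Definition sem_formula (S : Setting) (F : formula S) : sformula S :=
  fun R => exists P, List.In P F /\ R = statement_sem P.

Definition induced (S : Setting) (F : sformula S) : rel S :=
  fun x y => exists P, F P /\ P x y.

Definition rsub (S : Setting) (P Q : rel S) : Prop := forall x y, P x y -> Q x y.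
Definition rstrict_sub (S : Setting) (P Q : rel S) : Prop := rsub P Q /\ ~ rsub Q P.

Definition cleanup (S : Setting) (F : sformula S) : sformula S :=
  fun P => F P /\ ~ (exists Q, F Q /\ rstrict_sub P Q).

(* Operator T: statements of T(F) are the compositions of nonempty chains of
   statements of F (their disjunction is the transitive closure over D). *)
Definition rcomp (S : Setting) (P Q : rel S) : rel S :=
  fun x y => exists z, P x z /\ Q z y.

Inductive chain (S : Setting) (F : sformula S) : rel S -> Prop :=
| chain1 P : F P -> chain F P
| chainS P R : F P -> chain F R -> chain F (rcomp P R).

Definition opT (S : Setting) (F : sformula S) : sformula S := cleanup (chain F).

Definition Impl (S : Setting) (F : sformula S) (P Q : rel S) : Prop :=
  F Q /\ (forall t1 t2, Q t2 t1 -> P t1 t2) /\ ~ (forall t1 t2, P t1 t2 -> Q t2 t1).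

Definition refine (S : Setting) (F : sformula S) (P : rel S) : rel S :=
  fun x y => P x y /\ forall Q, Impl F P Q -> ~ Q y x.

Definition round (S : Setting) (F : sformula S) : sformula S :=
  fun P' => exists P, F P /\ P' = refine F P.

Definition stable (S : Setting) (F : sformula S) : Prop :=
  forall P Q, F P -> ~ Impl F P Q.

Definition opS (S : Setting) (F G : sformula S) : Prop :=
  exists k, (forall j, j < k -> ~ stable (iter j (@round S) F))
         /\ stable (iter k (@round S) F)
         /\ G = cleanup (iter k (@round S) F).

Inductive op := OpT | OpS.

Inductive apply_ops (S : Setting) : list op -> sformula S -> sformula S -> Prop :=
| ao_nil F : apply_ops nil F F
| ao_T X F G : apply_ops X (opT F) G -> apply_ops (OpT :: X) F G
| ao_S X F F' G : opS F F' -> apply_ops X F' G -> apply_ops (OpS :: X) F G.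

Definition strict (S : Setting) (R : rel S) : rel S := fun x y => R x y /\ ~ R y x.

Definition Best (S : Setting) (succ : rel S) (r : list (ttuple S)) (t : ttuple S) : Prop :=
  List.In t r /\ ~ (exists t2, List.In t2 r /\ succ t2 t).

Definition card_is (S : Setting) (P : ttuple S -> Prop) (k : nat) : Prop :=
  exists s, List.NoDup s /\ (forall t, List.In t s <-> P t) /\ List.length s = k.

Definition DiffVal (X Y : list op) (n k : nat) : Prop :=
  exists (S : Setting) (F0 : formula S) (GX GY : sformula S) (r : list (ttuple S)),
    valid_formula F0 /\
    List.NoDup r /\ List.length r = n /\
    apply_ops X (sem_formula F0) GX /\ apply_ops Y (sem_formula F0) GY /\
    card_is (fun t => Best (strict (induced GX)) r t /\
                      ~ Best (strict (induced GY)) r t) k.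

Definition IsDiffBest (X Y : list op) (n m : nat) : Prop :=
  DiffVal X Y n m /\ forall k, DiffVal X Y n k -> k <= m.

(* f(n) = Theta(n), with f given as the relation "m = f(n)" *)
Definition ThetaN (f : nat -> nat -> Prop) : Prop :=
  exists a b N, 0 < a /\ 0 < b /\
    forall n, N <= n -> exists m, f n m /\ n <= a * m /\ m <= b * n.

From Pilot Require Import Defs.
From mathcomp Require Import ssreflect ssrfun ssrbool eqtype ssrnat fintype.
From mathcomp Require Import zify.
From Stdlib Require Import List Lia Setoid.
From Stdlib Require Import Classical FunctionalExtensionality PropExtensionality.

(* The difference of two Best sets is a subset of r, so DiffBest(X, Y, n) <= n.
   For the lower bound, relations with n + 1 tuples and n tuples in the
   difference are built over a single attribute A with a flat taxonomy: a top
   value T above the pairwise incomparable values 0, 1, 2, ...; [tup i] has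
   value i and [empty_tup] has the empty schema.

   TST vs STST: F1 = {x <= T /\ y <= T,  x <= 0 /\ y <= T}.  T absorbs the
   second statement into the first, which makes all tuples having A
   equivalent, so under TST all of r = {tup 0, ..., tup n} is best.  S first
   refines the first statement by the more specific second one; afterwards
   tup 0 strictly beats every other tuple, and only tup 0 is best under STST.

   STST vs TST: F2 = {x <= T /\ x </= 0 /\ y <= 0,
                      (x <= T /\ y <= T) \/ (x </= T /\ y <= 0)}.
   T collapses it to y <= T, so under TST the empty tuple beats all of
   tup 1, ..., tup n in r = {empty_tup, tup 1, ..., tup n}.  S refines the
   second statement by the first, which the result then subsumes; the
   remaining statement is transitive and never strictly prefers anything to
   some tup i with i > 0, so all of tup 1, ..., tup n are best under STST. *)

Section FormulaAlgebra.

Context {S : Setting}.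
Implicit Types (M N P Q : Defs.rel S) (F : sformula S).

Lemma rel_ext M N : (forall x y, M x y <-> N x y) -> M = N.
Proof.
move=> MN; apply: functional_extensionality => x.
apply: functional_extensionality => y; exact: propositional_extensionality.
Qed.

Lemma sformula_ext F G : (forall P, F P <-> G P) -> F = G.
Proof.
move=> FG; apply: functional_extensionality => P; exact: propositional_extensionality.
Qed.

Lemma rsub_antisym M N : rsub M N -> rsub N M -> M = N.
Proof. by move=> MN NM; apply: rel_ext => x y; split; [apply: MN | apply: NM]. Qed.

Lemma clause_semE (c : clause S) x y :
  clause_sem c x y <-> fold_right (fun a acc => atom_sem a x y /\ acc) True c.
Proof.
elim: c => [|a c IH]; first by split=> // _ a [].
rewrite /= -IH; split=> [h | [ha hc] b [<- | /hc //]] //.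
by split=> [|b bc]; apply: h; [left | right].
Qed.

Lemma statement_semE (P : statement S) x y :
  statement_sem P x y <-> fold_right (fun c acc => clause_sem c x y \/ acc) False P.
Proof.
elim: P => [|c P IH]; first by split=> [[c []] | []].
rewrite /= -IH; split=> [[c' [[<- | c'P] h]] | [h | [c' [c'P h]]]].
- by left.
- by right; exists c'.
- by exists c; split=> //; left.
- by exists c'; split=> //; right.
Qed.

Definition sf1 M : sformula S := fun P => P = M.
Definition sf2 M N : sformula S := fun P => P = M \/ P = N.

Lemma sem_formula2 (P Q : statement S) :
  sem_formula (P :: Q :: nil) = sf2 (statement_sem P) (statement_sem Q).
Proof.
apply: sformula_ext => R; split=> [[P' [[<- | [<- | []]] ->]] | [-> | ->]].
- by left.
- by right.
- by exists P; split=> //; left.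
- by exists Q; split=> //; right; left.
Qed.

Lemma induced_sf1 M : induced (sf1 M) = M.
Proof. by apply: rel_ext => x y; split=> [[P [-> h]] | h] //; exists M. Qed.

Lemma induced_sf2 M N x y : induced (sf2 M N) x y <-> M x y \/ N x y.
Proof.
split=> [[P [[-> | ->] h]] | [h | h]]; [by left | by right | |].
- by exists M; split=> //; left.
- by exists N; split=> //; right.
Qed.

Lemma cleanup_sf1 M : cleanup (sf1 M) = sf1 M.
Proof.
apply: sformula_ext => P; split=> [[] // | ->]; split=> //.
by case=> Q [-> [_ h]]; apply: h.
Qed.

Lemma cleanup_sf2 M N : ~ rsub M N -> ~ rsub N M -> cleanup (sf2 M N) = sf2 M N.
Proof.
move=> nMN nNM; apply: sformula_ext => P; split=> [[] // | FP]; split=> //.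
case=> Q [FQ [PQ nQP]].
by case: FP FQ => [|] ? [|] ?; subst; [apply: nQP | apply: nMN | apply: nNM | apply: nQP].
Qed.

Lemma cleanup_sf2_sub M N : rsub M N -> ~ rsub N M -> cleanup (sf2 M N) = sf1 N.
Proof.
move=> MN nNM; apply: sformula_ext => P; split.
- case=> [[-> | ->] nmax] //; case: nmax; exists N; split=> //; by right.
- move=> ->; split; first by right.
  by case=> Q [[-> | ->] [NQ nQN]]; [apply: nNM | apply: nQN].
Qed.

Lemma opT_greatest F M :
  (forall P, chain F P -> rsub P M) -> chain F M -> opT F = sf1 M.
Proof.
move=> chainM FM; apply: sformula_ext => P; split=> [[FP nmax] | ->].
- apply: rsub_antisym; first exact: chainM.
  by apply: NNPP => nMP; apply: nmax; exists M; split=> //; split=> //; apply: chainM.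
- by split=> //; case=> Q [FQ [_ nQM]]; apply: nQM; apply: chainM.
Qed.

Lemma opT_sf1 M : rsub (rcomp M M) M -> opT (sf1 M) = sf1 M.
Proof.
move=> transM; apply: opT_greatest; last exact: chain1.
move=> P; elim=> [_ -> // | _ Q -> _ QM x y [z [xz zy]]].
by apply: transM; exists z; split=> //; apply: QM.
Qed.

Lemma opT_sf2 M N :
  (forall P, chain (sf2 M N) P -> rsub P M \/ rsub P N) ->
  ~ rsub M N -> ~ rsub N M -> opT (sf2 M N) = sf2 M N.
Proof.
move=> chainMN nMN nNM; apply: sformula_ext => P; split.
- case=> FP nmax; have maximal K : sf2 M N K -> rsub P K -> P = K.
    move=> FK PK; apply: rsub_antisym => //; apply: NNPP => nKP.
    by apply: nmax; exists K; split=> //; apply: chain1.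
  case: (chainMN _ FP) => PK; [left | right]; apply: maximal => //; by [left | right].
- move=> FP; split; first exact: chain1.
  case=> Q [FQ [PQ nQP]]; case: (chainMN _ FQ) => QK; case: FP => ?; subst P.
  + by apply: nQP.
  + by apply: nNM => x y /PQ /QK.
  + by apply: nMN => x y /PQ /QK.
  + by apply: nQP.
Qed.

Definition inv M : Defs.rel S := fun x y => M y x.

Lemma stable_of F : (forall P Q, F P -> F Q -> ~ rsub (inv Q) P) -> stable F.
Proof. by move=> h P Q FP [FQ [QP _]]; apply: (h P Q). Qed.

Lemma stable_sf1 M : (rsub (inv M) M -> rsub M (inv M)) -> stable (sf1 M).
Proof. by move=> h P Q -> [-> [MM nMM]]; apply/nMM/h. Qed.

Lemma opS_stable F : stable F -> opS F (cleanup F).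
Proof. by exists 0. Qed.

Lemma opS_round F : ~ stable F -> stable (round F) -> opS F (cleanup (round F)).
Proof. by move=> nstable stable1; exists 1; split=> //; case. Qed.

Lemma round_sf2 M N : round (sf2 M N) = sf2 (refine (sf2 M N) M) (refine (sf2 M N) N).
Proof.
apply: sformula_ext => P; split=> [[P0 [[-> | ->] ->]] | [-> | ->]].
- by left.
- by right.
- by exists M; split=> //; left.
- by exists N; split=> //; right.
Qed.

Lemma refine_id F P : (forall Q, ~ Impl F P Q) -> refine F P = P.
Proof.
move=> noImpl; apply: rel_ext => x y; split=> [[] // | Pxy].
by split=> // Q /noImpl.
Qed.

Lemma refine_Impl1 {F P Q} : (forall Q', Impl F P Q' <-> Q' = Q) ->
  refine F P = (fun x y => P x y /\ ~ Q y x).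
Proof.
move=> ImplQ; apply: rel_ext => x y; split=> [[Pxy h] | [Pxy nQ]].
- by split=> //; apply: h; apply/ImplQ.
- by split=> // Q' /ImplQ ->.
Qed.

Lemma apply_TST F G :
  opT F = G -> stable G -> cleanup G = G -> opT G = G ->
  apply_ops (OpT :: OpS :: OpT :: nil) F G.
Proof.
move=> FG stableG cleanG closedG; apply: ao_T; rewrite FG.
apply: (ao_S (F' := G)); first by rewrite -{2}cleanG; apply: opS_stable.
by apply: ao_T; rewrite closedG; apply: ao_nil.
Qed.

End FormulaAlgebra.

Lemma Best_strict_sym S (R : Defs.rel S) r t :
  (forall x y, R x y -> R y x) -> Best (strict R) r t <-> In t r.
Proof. by move=> symR; split=> [[] // | tr]; split=> // [[t2 [_ [/symR]]]]. Qed.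

Lemma DiffVal_le X Y n k : DiffVal X Y n k -> k <= n.
Proof.
case=> S [F0 [GX [GY [r [_ [_ [<- [_ [_ [s [uniq_s [s_diff <-]]]]]]]]]]]].
by apply/leP; apply: NoDup_incl_length => // t /s_diff [[]].
Qed.

Lemma ex_max_nat (P : nat -> Prop) B :
  (exists k, P k) -> (forall k, P k -> k <= B) ->
  exists m, P m /\ forall k, P k -> k <= m.
Proof.
elim: B => [|B IH] [k Pk] leB.
  by exists k; split=> // j /leB; rewrite leqn0 => /eqP ->.
case: (classic (P B.+1)) => [PB | nPB]; first by exists B.+1.
apply: IH; first by exists k.
move=> j Pj; move: (leB j Pj); rewrite leq_eqVlt => /orP [/eqP jB | //].
by rewrite jB in Pj.
Qed.

Lemma ThetaN_IsDiffBest X Y :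
  (forall n, DiffVal X Y n.+1 n) -> ThetaN (IsDiffBest X Y).
Proof.
(* n - 1 <= DiffBest(n) <= n, and n <= 2 (n - 1) as soon as n >= 2. *)
move=> diff_pred; exists 2, 1, 2; do 2!split=> //; case=> [// | n] n_gt0.
have [m [diff_m max_m]] : exists m, IsDiffBest X Y n.+1 m.
  by apply: (ex_max_nat _ n.+1); [exists n | apply: DiffVal_le].
exists m; split=> //.
have := max_m _ (diff_pred n); have := DiffVal_le _ _ _ _ diff_m; lia.
Qed.

Definition flat_le (a b : option nat) : Prop := a = b \/ b = None.

Lemma flat_le_refl a : flat_le a a.
Proof. by left. Qed.

Lemma flat_le_antisym a b : flat_le a b -> flat_le b a -> a = b.
Proof. by case=> [-> | ->] // [|]. Qed.

Lemma flat_le_trans a b c : flat_le a b -> flat_le b c -> flat_le a c.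
Proof. by case=> [-> | ->] // [<- | ->]; right. Qed.

Definition flat : Setting :=
  {| dim := 1; Val := fun _ => option nat; tle := fun _ => flat_le;
     tle_refl := fun _ => flat_le_refl; tle_antisym := fun _ => flat_le_antisym;
     tle_trans := fun _ => flat_le_trans |}.

Definition A : 'I_(dim flat) := ord0.
Notation tuple := (ttuple flat).

(* [None] is the top value, so [hasA t] says that [A] is in the schema of [t]. *)
Definition hasA (t : tuple) : Prop := vle t (None : Val flat A).
Definition isA0 (t : tuple) : Prop := vle t (Some 0 : Val flat A).

Definition tup (i : nat) : tuple := fun _ => Some (Some i).
Definition empty_tup : tuple := fun _ => None.

Lemma hasA_tup i : hasA (tup i).
Proof. by exists (Some i); split=> //; right. Qed.

Lemma hasA_empty : ~ hasA empty_tup.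
Proof. by case=> a []. Qed.

Lemma isA0_tup i : isA0 (tup i) <-> i = 0.
Proof. by split=> [[a [[<-] [[->] | //]]] | ->] //; exists (Some 0); split=> //; left. Qed.

Lemma not_isA0_tup1 : ~ isA0 (tup 1).
Proof. by move/isA0_tup. Qed.

Lemma isA0_hasA t : isA0 t -> hasA t.
Proof. by case=> a [ta _]; exists a; split=> //; right. Qed.

Lemma tup_inj : injective tup.
Proof. by move=> i j /(f_equal (fun t : tuple => t A)) [->]. Qed.

Lemma tup_neq_empty i : tup i <> empty_tup.
Proof. by move/(f_equal (fun t : tuple => t A)). Qed.

Definition tups (m n : nat) : list tuple := map tup (seq m n).

Lemma NoDup_tups m n : NoDup (tups m n).
Proof.
by apply: NoDup_map_NoDup_ForallPairs; [move=> i j _ _; apply: tup_inj | apply: seq_NoDup].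
Qed.

Lemma length_tups m n : length (tups m n) = n.
Proof. by rewrite length_map length_seq. Qed.

Lemma In_tups t m n : In t (tups m n) <-> exists i, t = tup i /\ m <= i < m + n.
Proof.
rewrite in_map_iff; split=> [[i [<- /in_seq mi]] | [i [-> mi]]].
- by exists i; split=> //; lia.
- by exists i; split=> //; apply/in_seq; lia.
Qed.

Lemma card_is_tups (P : tuple -> Prop) m n :
  (forall t, In t (tups m n) <-> P t) -> card_is P n.
Proof. by exists (tups m n); split; [apply: NoDup_tups | split; last apply: length_tups]. Qed.

Definition atomA (on_x : bool) (v : option nat) (pos : bool) : atom flat :=
  @Atom flat on_x A v pos.

Definition both (x y : tuple) : Prop := hasA x /\ hasA y.
Definition zero_over (x y : tuple) : Prop := isA0 x /\ hasA y.
Definition both_ref (x y : tuple) : Prop := both x y /\ ~ zero_over y x.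

Definition F1 : formula flat :=
  ((atomA true None true :: atomA false None true :: nil) :: nil) ::
  ((atomA true (Some 0) true :: atomA false None true :: nil) :: nil) :: nil.

Lemma sem_F1 : sem_formula F1 = sf2 both zero_over.
Proof.
rewrite sem_formula2; congr sf2; apply: rel_ext => x y;
  rewrite statement_semE /= clause_semE /= /both /zero_over /hasA /isA0; tauto.
Qed.

Lemma valid_F1 : valid_formula F1.
Proof.
move=> P [<- | [<- | []]]; split=> // c [<- | []]; exists (tup 0), (tup 0);
  apply/clause_semE; do !split; by [apply: hasA_tup | apply/isA0_tup].
Qed.

Lemma opT_F1 : opT (sf2 both zero_over) = sf1 both.
Proof.
apply: opT_greatest; last by apply: chain1; left.
move=> P; elim=> [_ [-> | ->] | _ R [-> | ->] _ Rboth] x y //.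
- by case=> /isA0_hasA.
- by case=> z [[hx _] /Rboth [_ hy]].
- by case=> z [[/isA0_hasA hx _] /Rboth [_ hy]].
Qed.

Lemma apply_TST_F1 : apply_ops (OpT :: OpS :: OpT :: nil) (sem_formula F1) (sf1 both).
Proof.
have transitive_both : rsub (rcomp both both) both by move=> x y [z [[hx _] [_ hy]]].
rewrite sem_F1; apply: apply_TST; [exact: opT_F1 | | exact: cleanup_sf1 |].
- by apply: stable_sf1 => _ x y [].
- exact: opT_sf1.
Qed.

Lemma both_ref_1 i : both_ref (tup i) (tup 1).
Proof. by split; [split; apply: hasA_tup | case=> /isA0_tup]. Qed.

Lemma zero_over_0 i : zero_over (tup 0) (tup i).
Proof. by split; [apply/isA0_tup | apply: hasA_tup]. Qed.

Lemma not_both_ref_0 t : ~ both_ref t (tup 0).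
Proof. by case=> [[ht _]]; apply; split=> //; apply/isA0_tup. Qed.

Lemma not_zero_over_1 t : ~ zero_over (tup 1) t.
Proof. by case=> /not_isA0_tup1. Qed.

Lemma Impl_F1_both Q : Impl (sf2 both zero_over) both Q <-> Q = zero_over.
Proof.
split=> [[[-> | ->] [QP nPQ]] // | ->].
- by case: nPQ => x y [].
- split; first by right.
  split=> [x y [/isA0_hasA hy hx] | h]; first by split.
  by apply: (not_zero_over_1 (tup 1)); apply: h; split; apply: hasA_tup.
Qed.

Lemma not_Impl_F1_zero_over Q : ~ Impl (sf2 both zero_over) zero_over Q.
Proof.
case=> [[-> | ->] [QP _]].
- by apply: (not_zero_over_1 (tup 1)); apply: QP; split; apply: hasA_tup.
- by apply: (not_zero_over_1 (tup 0)); apply: QP; apply: zero_over_0.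
Qed.

Lemma round_F1 : round (sf2 both zero_over) = sf2 both_ref zero_over.
Proof.
rewrite round_sf2 (refine_Impl1 Impl_F1_both) refine_id //.
exact: not_Impl_F1_zero_over.
Qed.

Lemma stable_F1_ref : stable (sf2 both_ref zero_over).
Proof.
apply: stable_of => P Q [-> | ->] [-> | ->] QP.
- by apply: (not_both_ref_0 (tup 1)); apply: QP; apply: both_ref_1.
- by apply: (not_both_ref_0 (tup 1)); apply: QP; apply: zero_over_0.
- by apply: (not_zero_over_1 (tup 1)); apply: QP; apply: (both_ref_1 1).
- by apply: (not_zero_over_1 (tup 0)); apply: QP; apply: zero_over_0.
Qed.

Lemma chain_F1_ref P :
  chain (sf2 both_ref zero_over) P -> rsub P both_ref \/ rsub P zero_over.
Proof.
elim=> [_ [-> | ->] | _ R [-> | ->] _ IH]; try by [left | right].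
- left=> x y [z [[[hx hz] nzx] Rzy]].
  case: IH => [/(_ _ _ Rzy) [[_ hy] nyz] | /(_ _ _ Rzy) [z0 _]]; last by case: nzx.
  by split=> // [[y0 _]]; apply: nyz.
- right=> x y [z [[zx _] Rzy]]; split=> //.
  by case: IH => [/(_ _ _ Rzy) [[]] | /(_ _ _ Rzy) []].
Qed.

Lemma apply_STST_F1 :
  apply_ops (OpS :: OpT :: OpS :: OpT :: nil) (sem_formula F1) (sf2 both_ref zero_over).
Proof.
have ref_zero : ~ rsub both_ref zero_over.
  by move=> h; apply: (not_zero_over_1 (tup 1)); apply/h/both_ref_1.
have zero_ref : ~ rsub zero_over both_ref.
  by move=> h; apply: (not_both_ref_0 (tup 0)); apply/h/zero_over_0.
have clean : cleanup (sf2 both_ref zero_over) = sf2 both_ref zero_over.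
  exact: cleanup_sf2.
rewrite sem_F1; apply: (ao_S (F' := sf2 both_ref zero_over)).
- rewrite -clean -round_F1; apply: opS_round; last by rewrite round_F1; apply: stable_F1_ref.
  by move=> h; apply: (h both zero_over); [left | apply/Impl_F1_both].
- have closed : opT (sf2 both_ref zero_over) = sf2 both_ref zero_over.
    by apply: opT_sf2 => //; exact: chain_F1_ref.
  by apply: apply_TST => //; exact: stable_F1_ref.
Qed.

Lemma strict_F1_ref_0 i :
  0 < i -> strict (induced (sf2 both_ref zero_over)) (tup 0) (tup i).
Proof.
move=> i_gt0; split; first by apply/induced_sf2; right; apply: zero_over_0.
case/induced_sf2 => [/not_both_ref_0 // | [/isA0_tup i0 _]]; lia.
Qed.

Lemma not_strict_F1_ref_0 t : ~ strict (induced (sf2 both_ref zero_over)) t (tup 0).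
Proof.
case=> /induced_sf2 [/not_both_ref_0 // | [t0 _]]; apply; apply/induced_sf2; right.
by split; [apply/isA0_tup | apply: isA0_hasA].
Qed.

Lemma Best_F1_ref n t :
  Best (strict (induced (sf2 both_ref zero_over))) (tups 0 n.+1) t <-> t = tup 0.
Proof.
split=> [[/In_tups [i [-> _]] nodom] | ->].
  case: i nodom => [// | i] nodom; case: nodom; exists (tup 0); split.
    by apply/In_tups; exists 0.
  exact: strict_F1_ref_0.
split; first by apply/In_tups; exists 0.
by case=> t2 [_ /not_strict_F1_ref_0].
Qed.

Lemma DiffVal_F1 n :
  DiffVal (OpT :: OpS :: OpT :: nil) (OpS :: OpT :: OpS :: OpT :: nil) n.+1 n.
Proof.
exists flat, F1, (sf1 both), (sf2 both_ref zero_over), (tups 0 n.+1).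
split; first exact: valid_F1.
split; first exact: NoDup_tups.
split; first exact: length_tups.
split; first exact: apply_TST_F1.
split; first exact: apply_STST_F1.
apply: (card_is_tups _ 1) => t.
rewrite induced_sf1 Best_strict_sym; last by move=> x y [].
rewrite Best_F1_ref !In_tups; split=> [[i [-> i_range]] | [[i [-> i_range]] ti0]].
- split; first by exists i; split=> //; lia.
  by move/tup_inj; lia.
- exists i; split=> //; case: i ti0 i_range => //; lia.
Qed.

Definition nz_over_zero (x y : tuple) : Prop := hasA x /\ ~ isA0 x /\ isA0 y.
Definition none_over_zero (x y : tuple) : Prop := ~ hasA x /\ isA0 y.
Definition both_or_none (x y : tuple) : Prop := both x y \/ none_over_zero x y.
Definition both_or_none_ref (x y : tuple) : Prop := both_or_none x y /\ ~ nz_over_zero y x.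
Definition over_hasA (x y : tuple) : Prop := hasA y.

Definition F2 : formula flat :=
  ((atomA true None true :: atomA true (Some 0) false :: atomA false (Some 0) true :: nil)
     :: nil) ::
  ((atomA true None true :: atomA false None true :: nil) ::
   (atomA true None false :: atomA false (Some 0) true :: nil) :: nil) :: nil.

Lemma sem_F2 : sem_formula F2 = sf2 nz_over_zero both_or_none.
Proof.
rewrite sem_formula2; congr sf2; apply: rel_ext => x y;
  rewrite statement_semE /= !clause_semE /= /nz_over_zero /both_or_none /both
          /none_over_zero /hasA /isA0; tauto.
Qed.

Lemma valid_F2 : valid_formula F2.
Proof.
move=> P [<- | [<- | []]]; split=> //.
- move=> c [<- | []]; exists (tup 1), (tup 0); apply/clause_semE.
  by do !split; [apply: hasA_tup | apply: not_isA0_tup1 | apply/isA0_tup].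
- move=> c [<- | [<- | []]].
  + by exists (tup 0), (tup 0); apply/clause_semE; do !split; apply: hasA_tup.
  + by exists empty_tup, (tup 0); apply/clause_semE;
      do !split; [apply: hasA_empty | apply/isA0_tup].
Qed.

Lemma nz_over_zero_10 : nz_over_zero (tup 1) (tup 0).
Proof. by split; [apply: hasA_tup | split; [apply: not_isA0_tup1 | apply/isA0_tup]]. Qed.

Lemma not_nz_over_zero_0 t : ~ nz_over_zero (tup 0) t.
Proof. by case=> _ [n0 _]; apply/n0/isA0_tup. Qed.

Lemma not_nz_over_zero_1 t : ~ nz_over_zero t (tup 1).
Proof. by case=> _ [_ /not_isA0_tup1]. Qed.

Lemma both_or_none_tup i j : both_or_none (tup i) (tup j).
Proof. by left; split; apply: hasA_tup. Qed.

Lemma both_or_none_empty0 : both_or_none empty_tup (tup 0).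
Proof. by right; split; [apply: hasA_empty | apply/isA0_tup]. Qed.

Lemma not_both_or_none_0empty : ~ both_or_none (tup 0) empty_tup.
Proof. by case=> [[_ /hasA_empty] | [h _]] //; apply/h/hasA_tup. Qed.

Lemma not_Impl_F2_nz Q : ~ Impl (sf2 nz_over_zero both_or_none) nz_over_zero Q.
Proof.
case=> [[-> | ->] [QP _]].
- by apply: (not_nz_over_zero_0 (tup 1)); apply/QP/nz_over_zero_10.
- by apply: (not_nz_over_zero_1 (tup 1)); apply/QP/both_or_none_tup.
Qed.

Lemma Impl_F2_both_or_none Q :
  Impl (sf2 nz_over_zero both_or_none) both_or_none Q <-> Q = nz_over_zero.
Proof.
split=> [[[-> | ->] [QP nPQ]] // | ->].
- by case: not_both_or_none_0empty; apply/QP/both_or_none_empty0.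
- split; first by left.
  split=> [x y [hy [_ /isA0_hasA hx]] | h]; first by left.
  by apply: (not_nz_over_zero_1 (tup 1)); apply/h/both_or_none_tup.
Qed.

Lemma round_F2 : round (sf2 nz_over_zero both_or_none) = sf2 nz_over_zero both_or_none_ref.
Proof.
rewrite round_sf2 (refine_Impl1 Impl_F2_both_or_none) refine_id //.
exact: not_Impl_F2_nz.
Qed.

Lemma both_or_none_ref_11 : both_or_none_ref (tup 1) (tup 1).
Proof. by split; [apply: both_or_none_tup | apply: not_nz_over_zero_1]. Qed.

Lemma both_or_none_ref_empty0 : both_or_none_ref empty_tup (tup 0).
Proof. by split; [apply: both_or_none_empty0 | apply: not_nz_over_zero_0]. Qed.

Lemma not_both_or_none_ref_0empty : ~ both_or_none_ref (tup 0) empty_tup.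
Proof. by case=> /not_both_or_none_0empty. Qed.

Lemma stable_F2_ref : stable (sf2 nz_over_zero both_or_none_ref).
Proof.
apply: stable_of => P Q [-> | ->] [-> | ->] QP.
- by apply: (not_nz_over_zero_0 (tup 1)); apply/QP/nz_over_zero_10.
- by apply: (not_nz_over_zero_1 (tup 1)); apply/QP/both_or_none_ref_11.
- by case: (QP _ _ nz_over_zero_10) => _; apply; apply: nz_over_zero_10.
- by apply: not_both_or_none_ref_0empty; apply/QP/both_or_none_ref_empty0.
Qed.

Lemma both_or_none_hasA x y : both_or_none x y -> hasA y.
Proof. by case=> [[] | [_ /isA0_hasA]]. Qed.

Lemma both_or_none_ref_trans :
  rsub (rcomp both_or_none_ref both_or_none_ref) both_or_none_ref.
Proof.
move=> x y [z [[xz nzx] [zy nyz]]].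
have hz := both_or_none_hasA _ _ xz; have hy := both_or_none_hasA _ _ zy.
have zero_z_y : isA0 z -> isA0 y by move=> z0; apply: NNPP => ny0; apply: nyz.
case: (classic (hasA x)) => hx.
- split; first by left.
  case=> _ [ny0 x0]; apply: nzx; split=> //; split=> // z0.
  exact/ny0/zero_z_y.
- case: xz => [[/hx] // | [_ z0]].
  by split; [right; split; last apply: zero_z_y | case=> _ [_ /isA0_hasA]].
Qed.

Lemma apply_STST_F2 :
  apply_ops (OpS :: OpT :: OpS :: OpT :: nil) (sem_formula F2) (sf1 both_or_none_ref).
Proof.
have nz_ref : rsub nz_over_zero both_or_none_ref.
  move=> x y [hx [nx0 y0]]; split; first by left; split=> //; apply: isA0_hasA.
  by case=> _ [_ x0].
have ref_nz : ~ rsub both_or_none_ref nz_over_zero.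
  by move=> h; apply: (not_nz_over_zero_1 (tup 1)); apply/h/both_or_none_ref_11.
have closed := opT_sf1 _ both_or_none_ref_trans.
rewrite sem_F2; apply: (ao_S (F' := sf1 both_or_none_ref)).
- rewrite -(cleanup_sf2_sub _ _ nz_ref ref_nz) -round_F2.
  apply: opS_round; last by rewrite round_F2; apply: stable_F2_ref.
  by move=> h; apply: (h both_or_none nz_over_zero); [right | apply/Impl_F2_both_or_none].
- apply: apply_TST => //; last exact: cleanup_sf1.
  apply: stable_sf1 => h; case: not_both_or_none_ref_0empty.
  exact/h/both_or_none_ref_empty0.
Qed.

Lemma opT_F2 : opT (sf2 nz_over_zero both_or_none) = sf1 over_hasA.
Proof.
apply: opT_greatest.
- move=> P; elim=> [_ [-> | ->] | P0 R _ _ Rhas].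
  + by move=> x y [_ [_ /isA0_hasA]].
  + exact: both_or_none_hasA.
  + by move=> x y [z [_ /Rhas]].
- have -> : over_hasA = rcomp both_or_none both_or_none.
    apply: rel_ext => x y; split=> [hy | [z [_ /both_or_none_hasA]]] //.
    exists (tup 0); split; last by left; split=> //; apply: hasA_tup.
    case: (classic (hasA x)) => hx; first by left; split=> //; apply: hasA_tup.
    by right; split=> //; apply/isA0_tup.
  by apply: chainS; [right | apply: chain1; right].
Qed.

Lemma apply_TST_F2 : apply_ops (OpT :: OpS :: OpT :: nil) (sem_formula F2) (sf1 over_hasA).
Proof.
rewrite sem_F2; apply: apply_TST; [exact: opT_F2 | | exact: cleanup_sf1 |].
- apply: stable_sf1 => h; case: hasA_empty.
  exact: (h (tup 0) empty_tup (hasA_tup 0)).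
- by apply: opT_sf1 => x y [z [_ hy]].
Qed.

Lemma not_strict_F2_ref_tup t i : 0 < i -> ~ strict both_or_none_ref t (tup i).
Proof.
move=> i_gt0 [[[[ht _] | [_ /isA0_tup i0]] _] nrev]; last by lia.
apply: nrev; split; first by left; split=> //; apply: hasA_tup.
by case=> _ [_ /isA0_tup i0]; lia.
Qed.

Lemma Best_over_hasA n t :
  Best (strict over_hasA) (empty_tup :: tups 1 n) t <-> t = empty_tup.
Proof.
split=> [[[<- // | /In_tups [i [-> _]]] nodom] | ->].
  case: nodom; exists empty_tup; split; first by left.
  by split; [apply: hasA_tup | apply: hasA_empty].
by split; [left | case=> t2 [_ [/hasA_empty]]].
Qed.

Lemma DiffVal_F2 n :
  DiffVal (OpS :: OpT :: OpS :: OpT :: nil) (OpT :: OpS :: OpT :: nil) n.+1 n.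
Proof.
exists flat, F2, (sf1 both_or_none_ref), (sf1 over_hasA), (empty_tup :: tups 1 n).
split; first exact: valid_F2.
split.
  by apply: NoDup_cons; [case/In_tups=> i [/esym/tup_neq_empty] | apply: NoDup_tups].
split; first by rewrite /= length_tups.
split; first exact: apply_STST_F2.
split; first exact: apply_TST_F2.
apply: (card_is_tups _ 1) => t; rewrite !induced_sf1 Best_over_hasA.
split=> [/In_tups [i [-> i_range]] | [[[<- // | //] _]]].
split; last exact: tup_neq_empty.
split; first by right; apply/In_tups; exists i.
by case=> t2 [_]; apply: not_strict_F2_ref_tup; lia.
Qed.

Theorem mainTheorem12 :
  ThetaN (IsDiffBest (OpT :: OpS :: OpT :: nil) (OpS :: OpT :: OpS :: OpT :: nil)) /\
  ThetaN (IsDiffBest (OpS :: OpT :: OpS :: OpT :: nil) (OpT :: OpS :: OpT :: nil)).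
Proof. by split; apply: ThetaN_IsDiffBest; [exact: DiffVal_F1 | exact: DiffVal_F2]. Qed.
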